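(* For every integer $r\ge 4$ and every positive integer $n$, $\mathrm{ex}(n,S_r,C_4)=\binom{n-1}{r-1}$.
   Context: $S_r$ denotes the star on $r$ vertices (one center joined to $r-1$ leaves), and $C_4$ the cycle on $4$ vertices. For graphs $H,G$, $\mathcal{N}(H,G)$ is the number of subgraphs of $G$ isomorphic to $H$, and $\mathrm{ex}(n,H,F)$ is the maximum of $\mathcal{N}(H,G)$ over $F$-free graphs $G$ on $n$ vertices. *)

From mathcomp Require Import all_boot.

Set Implicit Arguments. Unset Strict Implicit. Unset Printing Implicit Defensive.

Definition simple_graph (V : finType) (E : {set {set V}}) : bool :=
  [forall e in E, #|e| == 2].

(* (A, F) is a subgraph of G = (V, E) isomorphic to H = (VH, EH):
   F is a set of edges of G and there is an injection f : VH -> V with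
   image A mapping the edge set EH exactly onto F. *)
Definition is_copy (VH V : finType) (EH : {set {set VH}}) (E : {set {set V}})
    (p : {set V} * {set {set V}}) : bool :=
  (p.2 \subset E) &&
  [exists f : {ffun VH -> V},
     [&& injectiveb f, f @: [set: VH] == p.1 &
         [set (fun s : {set VH} => f @: s) s0 | s0 in EH] == p.2]].

Definition count_copies (VH V : finType) (EH : {set {set VH}}) (E : {set {set V}}) : nat :=
  #|[set p : {set V} * {set {set V}} | is_copy EH E p]|.

Definition ex (n : nat) (VH VF : finType) (EH : {set {set VH}}) (EF : {set {set VF}}) : nat :=
  \max_(E : {set {set 'I_n}} | simple_graph E && (count_copies EF E == 0)) count_copies EH E.

Definition star_edges (r : nat) : {set {set 'I_r}} :=
  [set e : {set 'I_r} | [exists i : 'I_r, exists j : 'I_r, [&& val i == 0, val j != 0 & e == [set i; j]]]].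

Definition C4_edges : {set {set 'I_4}} :=
  [set e : {set 'I_4} | [exists i : 'I_4, exists j : 'I_4, (val j == (val i).+1 %% 4) && (e == [set i; j])]].

From mathcomp Require Import all_boot zify.

Set Implicit Arguments. Unset Strict Implicit. Unset Printing Implicit Defensive.

(* A copy of S_(k+1) is a centre c with a k-set T of its neighbours, and in a
   C4-free graph two distinct vertices have at most one common neighbour.
   Fix a vertex w and send (T, c) to T if w \notin T, and to T - w + c
   otherwise; this is a k-subset of V - w from which T is recovered once c is
   known.  Two stars with the same image but distinct centres would share at
   least two leaves (this is where k >= 3, i.e. r >= 4, is needed), so the map
   is injective and there are at most C(n-1, k) stars.  The star K_(1,n-1) is
   C4-free and attains the bound. *)

Lemma imset_set2 (aT rT : finType) (f : aT -> rT) x y : f @: [set x; y] = [set f x; f y].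
Proof. by rewrite imsetU1 imset_set1. Qed.

Lemma setT_lift0 k : [set: 'I_k.+1] = ord0 |: [set lift ord0 j | j : 'I_k].
Proof.
apply/setP => i; rewrite !inE; case: (unliftP ord0 i) => [j ->|->]; last by rewrite eqxx.
by rewrite imset_f ?orbT.
Qed.

Local Notation "''v_' i" := (@Ordinal 4 i isT) (at level 8, i at level 2, format "''v_' i").

Lemma C4_edgesE :
  C4_edges = [set [set 'v_0; 'v_1]; [set 'v_1; 'v_2]; [set 'v_2; 'v_3]; [set 'v_3; 'v_0]].
Proof.
apply/setP => e; rewrite !inE; apply/existsP/idP.
  case=> i /existsP [j /andP [/eqP ij /eqP ->]].
  case: i ij => [[|[|[|[|i]]]] hi] //=; case: j => [[|[|[|[|j]]]] hj] //= _;
    by rewrite (bool_irrelevance hi isT) (bool_irrelevance hj isT) !eqxx ?orbT.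
rewrite -!orbA => /or4P [] /eqP ->.
- by exists 'v_0; apply/existsP; exists 'v_1; rewrite eqxx.
- by exists 'v_1; apply/existsP; exists 'v_2; rewrite eqxx.
- by exists 'v_2; apply/existsP; exists 'v_3; rewrite eqxx.
- by exists 'v_3; apply/existsP; exists 'v_0; rewrite eqxx.
Qed.

Lemma star_edgesE k : star_edges k.+1 = [set [set ord0; lift ord0 j] | j : 'I_k].
Proof.
apply/setP => e; rewrite inE; apply/existsP/imsetP.
  case=> i /existsP [j /and3P [/eqP i0 j0 /eqP ->]].
  have -> : i = ord0 by apply: val_inj.
  by case: (unliftP ord0 j) j0 => [j' ->|->] // _; exists j'.
by case=> j _ ->; exists ord0; apply/existsP; exists (lift ord0 j); rewrite eqxx.
Qed.

Section Graph.
Variables (V : finType) (E : {set {set V}}).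

Definition adj (x y : V) : bool := [set x; y] \in E.

Definition common_nbrs (a b : V) : {set V} := [set t | adj a t && adj b t].

Lemma adjC x y : adj x y = adj y x.
Proof. by rewrite /adj setUC. Qed.

Lemma adj_neq x y : simple_graph E -> adj x y -> x != y.
Proof.
move=> /forall_inP E2 /E2; apply: contraL => /eqP ->.
by rewrite setUid cards1.
Qed.

Lemma C4_edges_imset (f : 'I_4 -> V) :
  [set f @: e | e : {set 'I_4} in C4_edges] =
  [set [set f 'v_0; f 'v_1]; [set f 'v_1; f 'v_2]; [set f 'v_2; f 'v_3]; [set f 'v_3; f 'v_0]].
Proof. by rewrite C4_edgesE !imsetU !imset_set1 !imset_set2. Qed.

Lemma C4_copy_common_nbrs p :
  is_copy C4_edges E p -> exists a b, a != b /\ 1 < #|common_nbrs a b|.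
Proof.
case/andP => sub /existsP [f /and3P [/injectiveP f_inj _ /eqP f_E]].
move: sub; rewrite -f_E C4_edges_imset !subUset !sub1set -!andbA -!/(adj _ _).
case/and4P => e01 e12 e23 e30.
exists (f 'v_0), (f 'v_2); split; first by rewrite (inj_eq f_inj).
apply/card_gt1P; exists (f 'v_1), (f 'v_3).
by rewrite (inj_eq f_inj) !inE e01 adjC e12 e23 adjC e30.
Qed.

Lemma C4_copy_of a b x y : simple_graph E -> a != b -> x != y ->
  x \in common_nbrs a b -> y \in common_nbrs a b -> exists p, is_copy C4_edges E p.
Proof.
move=> E2 ab xy; rewrite !inE => /andP [ax bx] /andP [ay b_y].
pose f := [ffun i : 'I_4 => nth a [:: a; x; b; y] i].
exists (f @: setT, [set f @: e | e : {set 'I_4} in C4_edges]); apply/andP; split.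
  rewrite C4_edges_imset !ffunE /= !subUset !sub1set -!/(adj _ _).
  by rewrite ax adjC bx b_y adjC ay.
apply/existsP; exists f; rewrite !eqxx !andbT; apply/injectiveP => i j.
rewrite !ffunE => /eqP; rewrite nth_uniq // => [/eqP /val_inj //|].
rewrite /= !inE !negb_or ab xy (adj_neq E2 ax) (adj_neq E2 ay) (adj_neq E2 b_y).
by rewrite eq_sym (adj_neq E2 bx).
Qed.

Lemma C4_freeP : simple_graph E ->
  reflect (forall a b, a != b -> #|common_nbrs a b| <= 1) (count_copies C4_edges E == 0).
Proof.
move=> E2; rewrite /count_copies cards_eq0; apply: (iffP eqP) => [noC4 a b ab|sparse].
  rewrite leqNgt; apply/card_gt1P => -[x [y [xc yc xy]]].
  have [p p_copy] := C4_copy_of E2 ab xy xc yc.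
  by move/setP: noC4 => /(_ p); rewrite !inE p_copy.
apply/setP => p; rewrite !inE; apply/negP => /C4_copy_common_nbrs [a [b [ab]]].
by rewrite ltnNge sparse.
Qed.

End Graph.

Section Stars.
Variables (V : finType) (E : {set {set V}}).

Definition star_of (x : {set V} * V) : {set V} * {set {set V}} :=
  (x.2 |: x.1, [set [set x.2; t] | t in x.1]).

Definition star_data (k : nat) : {set {set V} * V} :=
  [set x : {set V} * V |
    [&& x.1 \subset [set t | adj E x.2 t], x.2 \notin x.1 & #|x.1| == k]].

Lemma star_edges_imset k (f : 'I_k.+1 -> V) :
  (f @: setT, [set f @: e | e : {set 'I_k.+1} in star_edges k.+1]) =
  star_of ([set f (lift ord0 j) | j : 'I_k], f ord0).
Proof.
rewrite /star_of /= setT_lift0 star_edgesE imsetU1 -!imset_comp.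
by congr (_, _); apply: eq_imset => j /=; rewrite imset_set2.
Qed.

Lemma star_copyP k p :
  reflect (exists2 x, x \in star_data k & p = star_of x) (is_copy (star_edges k.+1) E p).
Proof.
apply: (iffP andP) => [[sub /existsP [f /and3P [/injectiveP f_inj /eqP f_V /eqP f_E]]]|].
  have p_star : p = star_of ([set f (lift ord0 j) | j : 'I_k], f ord0).
    by rewrite -star_edges_imset f_V f_E -surjective_pairing.
  exists ([set f (lift ord0 j) | j : 'I_k], f ord0) => //.
  rewrite inE /=; apply/and3P; split.
  - apply/subsetP => _ /imsetP [j _ ->]; rewrite inE; apply: (subsetP sub).
    by rewrite p_star; do 2 apply: imset_f.
  - by apply/imsetP => -[j _ /f_inj /eqP]; rewrite (negbTE (neq_lift _ _)).
  - by rewrite card_imset ?cardsT ?card_ord //; apply: inj_comp f_inj (@lift_inj _ ord0).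
case=> -[T c]; rewrite inE /= => /and3P [T_nbrs cT /eqP <-] ->.
pose f : {ffun 'I_#|T|.+1 -> V} :=
  [ffun i => if unlift ord0 i is Some j then enum_val j else c].
have f0 : f ord0 = c by rewrite ffunE unlift_none.
have f_lift j : f (lift ord0 j) = enum_val j by rewrite ffunE liftK.
have f_leaves : [set f (lift ord0 j) | j : 'I_#|T|] = T.
  apply/setP => t; apply/imsetP/idP => [[j _ ->]|tT]; first by rewrite f_lift enum_valP.
  by exists (enum_rank_in tT t); rewrite // f_lift enum_rankK_in.
split.
  by apply/subsetP => _ /imsetP [t tT ->]; have := subsetP T_nbrs t tT; rewrite inE.
apply/existsP; exists f; have := star_edges_imset f; rewrite f_leaves f0 => -[-> ->].
rewrite !eqxx !andbT; apply/injectiveP => i j; rewrite !ffunE.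
case: (unliftP ord0 i) => [i' ->|->]; case: (unliftP ord0 j) => [j' ->|->] //.
- by move/enum_val_inj ->.
- by move=> iE; move: cT; rewrite -iE enum_valP.
- by move=> jE; move: cT; rewrite jE enum_valP.
Qed.

Lemma count_star_copies k : count_copies (star_edges k.+1) E = #|star_of @: star_data k|.
Proof.
apply: eq_card => p; rewrite inE.
by apply/star_copyP/imsetP => -[x xD ->]; exists x.
Qed.

End Stars.

Section LeafSwap.
Variables (V : finType) (w : V).

Definition swap_leaf (x : {set V} * V) : {set V} :=
  if w \in x.1 then x.2 |: (x.1 :\ w) else x.1.

Definition unswap_leaf (S : {set V}) (c : V) : {set V} :=
  if c \in S then w |: (S :\ c) else S.

Lemma swap_leafK (T : {set V}) c : c \notin T -> unswap_leaf (swap_leaf (T, c)) c = T.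
Proof.
move=> cT; rewrite /swap_leaf /=.
case: ifP => [wT|_]; rewrite /unswap_leaf; last by rewrite (negbTE cT).
by rewrite setU11 setU1K ?setD1K // !inE negb_and cT orbT.
Qed.

Lemma swap_leaf_draw (T : {set V}) c : c \notin T ->
  swap_leaf (T, c) \in [set S : {set V} | S \subset [set~ w] & #|S| == #|T|].
Proof.
move=> cT; rewrite inE /swap_leaf /=.
case: ifP => [wT|/negbT wT]; last by rewrite eqxx andbT subsetC sub1set inE.
have cw : c != w by apply: contraNneq cT => ->.
rewrite subUset sub1set !inE cw subsetDr /=.
by rewrite cardsU1 !inE negb_and cT orbT (cardsD1 w T) wT.
Qed.

Lemma unswap_leaf_meet (S : {set V}) c1 c2 : w \notin S -> c1 != c2 -> 2 < #|S| ->
  1 < #|unswap_leaf S c1 :&: unswap_leaf S c2|.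
Proof.
move=> wS c12 S_gt2.
have S_sub c : S :\ c \subset unswap_leaf S c.
  by rewrite /unswap_leaf; case: ifP => _; [exact: subsetUr | exact: subD1set].
have D_sub : S :\ c1 :\ c2 \subset unswap_leaf S c1 :&: unswap_leaf S c2.
  rewrite subsetI (subset_trans (subD1set _ _) (S_sub c1)) /=.
  exact: subset_trans (setSD _ (subD1set S c1)) (S_sub c2).
have cardD : #|S :\ c1 :\ c2| + (c1 \in S) + (c2 \in S) = #|S|.
  by rewrite [#|S|](cardsD1 c1) [#|S :\ c1|](cardsD1 c2) !inE eq_sym c12 /=; lia.
have [/andP [c1S c2S]|not_both] := boolP ((c1 \in S) && (c2 \in S)).
  have wD_sub : w |: (S :\ c1 :\ c2) \subset unswap_leaf S c1 :&: unswap_leaf S c2.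
    by rewrite subUset D_sub andbT sub1set !inE /unswap_leaf c1S c2S !setU11.
  rewrite (leq_trans _ (subset_leq_card wD_sub)) // cardsU1 !inE (negbTE wS) !andbF.
  by move: cardD; rewrite c1S c2S /=; lia.
rewrite (leq_trans _ (subset_leq_card D_sub)) //.
by move: not_both cardD; case: (c1 \in S); case: (c2 \in S) => //= _; lia.
Qed.

End LeafSwap.

Section UpperBound.
Variables (V : finType) (E : {set {set V}}).
Hypothesis sparse : forall a b : V, a != b -> #|common_nbrs E a b| <= 1.

Lemma star_data_meet k x1 x2 : x1 \in star_data E k -> x2 \in star_data E k ->
  x1.2 != x2.2 -> #|x1.1 :&: x2.1| <= 1.
Proof.
rewrite !inE => /and3P [T1_nbrs _ _] /and3P [T2_nbrs _ _] c12.
apply: leq_trans (sparse c12); apply/subset_leq_card/subsetP => t.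
rewrite !inE => /andP [t1 t2].
by have := subsetP T1_nbrs t t1; have := subsetP T2_nbrs t t2; rewrite !inE => -> ->.
Qed.

Lemma swap_leaf_inj k (w : V) : 2 < k -> {in star_data E k &, injective (swap_leaf w)}.
Proof.
move=> k_gt2 [T1 c1] [T2 c2] x1D x2D eqS.
have := x1D; have := x2D; rewrite !inE /=.
move=> /and3P [_ c2T2 /eqP k2] /and3P [_ c1T1 _].
have T1E := swap_leafK w c1T1; have T2E := swap_leafK w c2T2; rewrite /= eqS in T1E.
have [c12|c12] := eqVneq c1 c2; first by subst c2; rewrite -T1E T2E.
have := swap_leaf_draw w c2T2; rewrite inE k2 => /andP [S_w /eqP S_k].
have wS : w \notin swap_leaf w (T2, c2).
  by apply/negP => /(subsetP S_w); rewrite !inE eqxx.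
have := unswap_leaf_meet wS c12; rewrite S_k => /(_ k_gt2); rewrite T1E T2E ltnNge.
by rewrite (star_data_meet x1D x2D c12).
Qed.

Lemma card_star_data_le k (w : V) : 2 < k -> #|star_data E k| <= 'C(#|V|.-1, k).
Proof.
move=> k_gt2; rewrite -(card_in_imset (swap_leaf_inj (w := w) k_gt2)).
rewrite -(cardsC1 w) -cards_draws.
apply/subset_leq_card/subsetP => _ /imsetP [[T c] TcD ->].
by rewrite inE in TcD; case/and3P: TcD => _ cT /eqP <-; apply: swap_leaf_draw.
Qed.

End UpperBound.

Section StarGraph.
Variable m : nat.

Lemma star_edges_simple : simple_graph (star_edges m.+1).
Proof.
apply/forall_inP => e; rewrite star_edgesE => /imsetP [j _ ->].
by rewrite cards2 eq_sym neq_lift.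
Qed.

Lemma adj_star_edges (u v : 'I_m.+1) : adj (star_edges m.+1) u v -> u != ord0 -> v = ord0.
Proof.
rewrite /adj star_edgesE => /imsetP [j _ uvE] u0.
have : ord0 \in [set u; v] by rewrite uvE setU11.
by rewrite !inE eq_sym (negbTE u0) eq_sym => /eqP.
Qed.

Lemma adj_ord0_star_edges (t : 'I_m.+1) : t != ord0 -> adj (star_edges m.+1) ord0 t.
Proof.
rewrite eq_sym => /unlift_some [j -> _].
by rewrite /adj star_edgesE; apply: imset_f.
Qed.

Lemma star_edges_sparse (a b : 'I_m.+1) :
  a != b -> #|common_nbrs (star_edges m.+1) a b| <= 1.
Proof.
move=> ab; rewrite -(cards1 (@ord0 m)); apply/subset_leq_card/subsetP => t.
rewrite !inE => /andP [a_t b_t]; apply/eqP.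
have [a0|a0] := eqVneq a ord0; last exact: adj_star_edges a_t a0.
by apply: adj_star_edges b_t _; rewrite -a0 eq_sym.
Qed.

Lemma star_edges_star_copies k :
  'C(m, k) <= count_copies (star_edges k.+1) (star_edges m.+1).
Proof.
pose D := [set T : {set 'I_m.+1} | T \subset [set~ ord0] & #|T| == k].
have ord0_notin T : T \in D -> ord0 \notin T.
  by rewrite inE => /andP [T_0 _]; apply/negP => /(subsetP T_0); rewrite !inE eqxx.
have star0_inj : {in D &, injective (fun T => star_of (T, ord0))}.
  move=> T1 T2 /ord0_notin T1_0 /ord0_notin T2_0 [T12 _].
  by rewrite -(setU1K T1_0) T12 setU1K.
have -> : 'C(m, k) = #|D| by rewrite cards_draws cardsC1 card_ord.
rewrite -(card_in_imset star0_inj) count_star_copies.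
apply/subset_leq_card/subsetP => _ /imsetP [T TD ->]; apply: imset_f.
have := TD; rewrite !inE /= (ord0_notin T TD) => /andP [T_0 ->]; rewrite !andbT.
by apply/subsetP => t /(subsetP T_0); rewrite !inE; apply: adj_ord0_star_edges.
Qed.

End StarGraph.

Theorem proposition3p2 (r n : nat) :
  4 <= r -> 0 < n -> ex n (star_edges r) C4_edges = 'C(n.-1, r.-1).
Proof.
case: r => [|k] // k_gt2; case: n => [|m] // _ /=.
apply/eqP; rewrite eqn_leq; apply/andP; split.
  apply/bigmax_leqP => E /andP [E2 /(C4_freeP E2) sparse].
  rewrite count_star_copies (leq_trans (leq_imset_card _ _)) //.
  by have := card_star_data_le sparse ord0 k_gt2; rewrite card_ord.
apply: leq_trans (star_edges_star_copies m k) _.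
apply: leq_bigmax_cond; rewrite star_edges_simple /=.
by apply/C4_freeP; [exact: star_edges_simple | exact: star_edges_sparse].
Qed.
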